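(* Let $N,k\ge 10$, let $L\subseteq Nk\mathbb{Z}^d$, and let $\gamma\in\mathbb{Z}^d$ with $0\le\gamma_i<k$ for all $i\le d$. Set $A=\bigcup_{\beta\in L}\big(\beta+[0,Nk)^d\big)$ and $B=\bigcup_{\beta\in L}\big(\beta+\gamma+[-3k,(N+3)k)^d\big)$ (intervals of integers). Then $B\setminus A$ can be tiled by almost $k$-boxes.
   Context: A box in $\mathbb{Z}^d$ is a product of integer intervals. An almost $k$-box is a box all of whose side lengths lie between $k$ and $2k$ and at most one of whose side lengths differs from $k$. A set is tiled by a family of boxes if it is partitioned into translates of boxes from that family. *)

From mathcomp Require Import all_boot all_order all_algebra.
Set Implicit Arguments. Unset Strict Implicit. Unset Printing Implicit Defensive.
Import Order.TTheory GRing.Theory Num.Theory.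
Local Open Scope ring_scope.

Definition point (d : nat) := 'I_d -> int.

Definition box (d : nat) (a : point d) (l : 'I_d -> nat) : point d -> Prop :=
  fun x => forall i, a i <= x i < a i + (l i)%:Z.

Definition almost_box (k d : nat) (l : 'I_d -> nat) : Prop :=
  (forall i, (k <= l i <= 2 * k)%N) /\
  (forall i j, l i <> k -> l j <> k -> i = j).

(* S is partitioned into translates of almost k-boxes: a family T of tiles
   (corner, side lengths), each an almost k-box, each contained in S, and
   every point of S lies in exactly one tile of T. *)
Definition tiled_by_almost_boxes (k d : nat) (S : point d -> Prop) : Prop :=
  exists T : point d * ('I_d -> nat) -> Prop,
    (forall t, T t -> almost_box k t.2) /\
    (forall t, T t -> forall x, box t.1 t.2 x -> S x) /\
    (forall x, S x -> exists t, [/\ T t, box t.1 t.2 x &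
        forall t', T t' -> box t'.1 t'.2 x -> t' = t]).

From mathcomp Require Import all_boot all_order all_algebra.
Import Order.TTheory GRing.Theory Num.Theory.
Local Open Scope ring_scope.
From mathcomp Require Import zify.
From Stdlib Require Import Classical_Prop FunctionalExtensionality.
Set Implicit Arguments. Unset Strict Implicit. Unset Printing Implicit Defensive.

(* B \ A is removed in 5d slabs.  Coordinate by coordinate, the box
   [gamma_i - 3k, gamma_i + (N+3)k) around every lattice point is shrunk to
   [0, Nk) by five cuts, each removing at one end a slab whose thickness
   (k, 2k - gamma_i, k, k, gamma_i + k) lies between k and 2k.  The points
   removed by one cut are tiled by boxes that have the slab's thickness in the
   cut coordinate and are cells of a k-grid in the others: since lattice points
   are Nk apart and all other sides are multiples of k, no such box straddles
   the boundary of another lattice translate. *)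

Lemma dvdz_ltD_le (k p q : int) : 0 < k -> (k %| p - q)%Z -> p < q + k -> p <= q.
Proof.
move=> k_gt0 /dvdzP[m e] lt_pq.
have [m_le0 | m_ge1] : m <= 0 \/ 1 <= m by lia.
all: nia.
Qed.

Definition grid_corner (o K z : int) : int := ((z - o) %/ K)%Z * K + o.

Lemma grid_corner_bounds (o K z : int) : 0 < K ->
  grid_corner o K z <= z < grid_corner o K z + K.
Proof. by move=> K_gt0; rewrite /grid_corner; nia. Qed.

Lemma grid_corner_dvd (o K z : int) : (K %| grid_corner o K z - o)%Z.
Proof. by rewrite /grid_corner addrK dvdz_mull. Qed.

Lemma grid_corner_uniq (o K z c : int) : 0 < K -> (K %| c - o)%Z ->
  c <= z < c + K -> grid_corner o K z = c.
Proof.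
move=> K_gt0 /dvdzP[q co] z_in.
rewrite /grid_corner (_ : z - o = q * K + (z - c)); last by lia.
by rewrite divzMDl ?divz_small; lia.
Qed.

Lemma grid_cell_sub (k o b beta u v : int) :
  0 < k -> (k %| beta)%Z -> (k %| b - o)%Z -> grid_corner o k u = grid_corner o k v ->
  o <= u - beta < b -> o <= v - beta < b.
Proof.
move=> k_gt0 /dvdzP[m ->] /dvdzP[n bo] same_cell u_in.
have := grid_corner_bounds o u k_gt0; have := grid_corner_bounds o v k_gt0.
have /dvdzP[q co] := grid_corner_dvd o k u.
rewrite -same_cell; set c := grid_corner o k u in co * => v_cell u_cell.
have lo : o + m * k <= c.
  by apply: (dvdz_ltD_le k_gt0); [apply/dvdzP; exists (m - q); nia | lia].
have hi : c + k <= b + m * k.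
  by apply: (dvdz_ltD_le k_gt0); [apply/dvdzP; exists (q + 1 - n - m); nia | lia].
lia.
Qed.

Definition end_slab (a b a' b' s : int) (t : nat) : Prop :=
  (s = a /\ a' = a + t%:Z /\ b' = b) \/ (s + t%:Z = b /\ a' = a /\ b' = s).

Section EndSlab.
Variables (a b a' b' s : int) (t : nat).
Hypothesis cut : end_slab a b a' b' s t.

Lemma end_slab_le : a <= a' /\ b' <= b.
Proof. by case: cut; lia. Qed.

Lemma end_slab_mem z : a <= z < b -> ~ (a' <= z < b') -> s <= z < s + t%:Z.
Proof. by case: cut; lia. Qed.

Lemma end_slab_sub z : a' <= b' -> s <= z < s + t%:Z -> a <= z < b.
Proof. by case: cut; lia. Qed.

(* A translate of the slab by a multiple of K lies inside [a', b') or outside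
   it: the slab is at most K thick, [a', b') at least K long, [a, b) at most 2K. *)
Lemma end_slab_shift (K u v m : int) : 0 < K -> t%:Z <= K ->
  K <= b' - a' -> b - a <= 2 * K -> (K %| m)%Z ->
  s <= u < s + t%:Z -> s <= v < s + t%:Z -> a' <= u + m < b' -> a' <= v + m < b'.
Proof.
move=> K_gt0 t_le_K K_le le_2K /dvdzP[q ->] u_in v_in.
have [q_le | [-> | [-> | [-> | q_ge]]]] :
  q <= -2 \/ q = -1 \/ q = 0 \/ q = 1 \/ 2 <= q by lia.
all: rewrite ?mulN1r ?mul0r ?mul1r; case: cut; nia.
Qed.

End EndSlab.

Section Tilings.
Variables (k d : nat).
Implicit Types (S X Y Z : point d -> Prop).

Lemma tiled_ext S S' : (forall x, S x <-> S' x) ->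
  tiled_by_almost_boxes k S -> tiled_by_almost_boxes k S'.
Proof.
move=> eS [T [T_almost [T_sub T_cover]]]; exists T; split=> //.
by split=> [t Tt x /(T_sub t Tt) /eS | x /eS /T_cover].
Qed.

Lemma tiled_of_tile_map S (tau : point d -> point d * ('I_d -> nat)) :
  (forall x, S x -> [/\ almost_box k (tau x).2, box (tau x).1 (tau x).2 x &
     forall y, box (tau x).1 (tau x).2 y -> S y /\ tau y = tau x]) ->
  tiled_by_almost_boxes k S.
Proof.
move=> tau_tile; exists (fun t => exists2 x, S x & tau x = t); split; [|split].
- by move=> _ [x Sx <-]; case: (tau_tile x Sx).
- by move=> _ [x Sx <-] y y_in; have [_ _ /(_ y y_in) []] := tau_tile x Sx.
- move=> x Sx; have [_ x_in _] := tau_tile x Sx; exists (tau x); split => //.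
    by exists x.
  by move=> _ [x' Sx' <-] x_in'; have [_ _ /(_ x x_in') [_ ->]] := tau_tile x' Sx'.
Qed.

Lemma tiled_glue X Y Z : (forall x, Z x -> Y x) -> (forall x, Y x -> X x) ->
  tiled_by_almost_boxes k (fun x => X x /\ ~ Y x) ->
  tiled_by_almost_boxes k (fun x => Y x /\ ~ Z x) ->
  tiled_by_almost_boxes k (fun x => X x /\ ~ Z x).
Proof.
move=> ZY YX [T1 [T1_almost [T1_sub T1_cover]]] [T2 [T2_almost [T2_sub T2_cover]]].
exists (fun t => T1 t \/ T2 t); split; [|split].
- by move=> t [/T1_almost | /T2_almost].
- move=> t [/T1_sub | /T2_sub] t_sub x /t_sub [].
    by move=> Xx nYx; split=> // /ZY.
  by move=> /YX.
- move=> x [Xx nZx]; case: (classic (Y x)) => [Yx | nYx].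
  + have [t [T2t x_in t_uniq]] := T2_cover x (conj Yx nZx).
    exists t; split=> [|//|t' [T1t' | T2t'] x_in']; [by right | | exact: t_uniq].
    by have [] := T1_sub t' T1t' x x_in'.
  + have [t [T1t x_in t_uniq]] := T1_cover x (conj Xx nYx).
    exists t; split=> [|//|t' [T1t' | T2t'] x_in']; [by left | exact: t_uniq |].
    by have [] := T2_sub t' T2t' x x_in'.
Qed.

Lemma tiled_chain (X : nat -> point d -> Prop) m :
  (forall n, (n < m)%N -> (forall x, X n.+1 x -> X n x) /\
     tiled_by_almost_boxes k (fun x => X n x /\ ~ X n.+1 x)) ->
  tiled_by_almost_boxes k (fun x => X 0%N x /\ ~ X m x).
Proof.
elim: m => [_ | m IH steps].
  by exists (fun _ => False); do 2 split=> //; move=> x [].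
have sub0 n x : (n <= m)%N -> X n x -> X 0%N x.
  elim: n => // n IHn n_lt /(steps n (ltnW n_lt)).1; apply: IHn; exact: ltnW.
have [sub_m tiled_m] := steps m (leqnn _).
apply: (tiled_glue sub_m (fun x => sub0 m x (leqnn m)) _ tiled_m).
by apply: IH => n n_lt; apply: steps; exact: ltnW.
Qed.

End Tilings.

Definition translates d (L : point d -> Prop) (a b : point d) : point d -> Prop :=
  fun x => exists beta, L beta /\ forall j, a j <= x j - beta j < b j.

Section PeelSlab.
Variables (d k K : nat) (L : point d -> Prop) (a b a' b' : point d).
Variables (i : 'I_d) (s : int) (t : nat).
Hypotheses (k_gt0 : (0 < k)%N) (k_dvd_K : (k %| K)%N)
  (L_dvd : forall beta, L beta -> forall j, (K%:Z %| beta j)%Z)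
  (t_range : (k <= t <= 2 * k)%N) (t_le_K : (t <= K)%N)
  (same_off_i : forall j, j != i ->
     [/\ a' j = a j, b' j = b j & (k%:Z %| b j - a j)%Z])
  (K_le_inner : K%:Z <= b' i - a' i) (outer_le_2K : b i - a i <= 2 * K%:Z)
  (cut : end_slab (a i) (b i) (a' i) (b' i) s t).

Definition slab_tile (x : point d) : point d * ('I_d -> nat) :=
  (fun j => if j == i then grid_corner s K (x i) else grid_corner (a j) k (x j),
   fun j => if j == i then t else k).

Definition in_slab (beta x : point d) : Prop := s <= x i - beta i < s + t%:Z.

Let K_gt0 : 0 < K%:Z.
Proof. by lia. Qed.

Let L_dvd_k beta j : L beta -> (k%:Z %| beta j)%Z.
Proof. by move=> /L_dvd /(_ j); apply: dvdz_trans; rewrite dvdzE. Qed.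

Lemma slab_tile_almost_box x : almost_box k (slab_tile x).2.
Proof.
split=> [j | j j'] /=; first by case: (j == i); lia.
by do 2 case: eqVneq => [-> | _].
Qed.

Lemma slab_corner beta z : L beta -> s <= z - beta i < s + t%:Z ->
  grid_corner s K z = s + beta i.
Proof.
move=> Lb z_in; apply: grid_corner_uniq => //; last by lia.
by rewrite addrC addKr; exact: L_dvd.
Qed.

Lemma slab_tile_mem beta x : L beta -> in_slab beta x ->
  box (slab_tile x).1 (slab_tile x).2 x.
Proof.
move=> Lb x_in j /=; case: eqVneq => [-> | _]; last exact: grid_corner_bounds.
by rewrite (slab_corner Lb x_in); move: x_in; rewrite /in_slab; lia.
Qed.

Lemma slab_tile_mate beta x y : L beta -> in_slab beta x ->
  box (slab_tile x).1 (slab_tile x).2 y -> in_slab beta y /\ slab_tile y = slab_tile x.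
Proof.
move=> Lb x_in y_in.
have y_in_i : in_slab beta y.
  by move: (y_in i); rewrite /= eqxx (slab_corner Lb x_in) /in_slab; lia.
split=> //; congr pair; apply: functional_extensionality => j /=.
case: (eqVneq j i) => [_ | j_ne].
  by rewrite (slab_corner Lb x_in) (slab_corner Lb y_in_i).
apply: grid_corner_uniq; [lia | exact: grid_corner_dvd |].
by move: (y_in j); rewrite /= (negbTE j_ne).
Qed.

Lemma slab_tile_corner x y j : slab_tile x = slab_tile y -> j != i ->
  grid_corner (a j) k (x j) = grid_corner (a j) k (y j).
Proof. by move=> /(congr1 (fun tau => tau.1 j)) /=; case: eqVneq. Qed.

Lemma slab_tile_transfer beta beta' x y : L beta -> L beta' ->
  in_slab beta x -> in_slab beta y -> slab_tile x = slab_tile y ->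
  (forall j, a' j <= x j - beta' j < b' j) -> forall j, a' j <= y j - beta' j < b' j.
Proof.
move=> Lb Lb' x_slab y_slab same x_in j; case: (eqVneq j i) => [-> | j_ne].
  have shift z : z - beta' i = (z - beta i) + (beta i - beta' i) by lia.
  rewrite shift.
  apply: (end_slab_shift cut K_gt0 _ K_le_inner outer_le_2K _ x_slab y_slab).
  - by lia.
  - exact: rpredB (L_dvd Lb i) (L_dvd Lb' i).
  - by rewrite -shift.
have [a'_j b'_j dvd_j] := same_off_i j_ne; rewrite a'_j b'_j.
apply: (grid_cell_sub _ (L_dvd_k j Lb') dvd_j (slab_tile_corner same j_ne)); first by lia.
by rewrite -a'_j -b'_j.
Qed.

Lemma peel_slab : (forall x, translates L a' b' x -> translates L a b x) /\
  tiled_by_almost_boxes k (fun x => translates L a b x /\ ~ translates L a' b' x).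
Proof.
have same_bounds j x beta : j != i -> (a j <= x - beta < b j) = (a' j <= x - beta < b' j).
  by move=> j_ne; have [-> -> _] := same_off_i j_ne.
split=> [x [beta [Lb x_in]] | ].
  exists beta; split=> // j; have := x_in j; case: (eqVneq j i) => [-> | j_ne].
    by have := end_slab_le cut; lia.
  by rewrite same_bounds.
apply: (tiled_of_tile_map (tau := slab_tile)) => x [[beta [Lb x_in]] x_out].
have x_slab : in_slab beta x.
  apply: (end_slab_mem cut (x_in i)) => xi_in; apply: x_out; exists beta; split=> // j.
  by case: (eqVneq j i) => [-> // | j_ne]; rewrite -same_bounds.
split; [exact: slab_tile_almost_box | exact: slab_tile_mem Lb x_slab | move=> y y_in].
have [y_slab same] := slab_tile_mate Lb x_slab y_in.
split=> //; split.
- exists beta; split=> // j; case: (eqVneq j i) => [-> | j_ne].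
    by apply: (end_slab_sub cut); [lia | exact: y_slab].
  have [_ _ dvd_j] := same_off_i j_ne.
  apply: (grid_cell_sub _ (L_dvd_k j Lb) dvd_j _ (x_in j)); first by lia.
  by rewrite (slab_tile_corner same j_ne).
- move=> [beta' [Lb' y_in']]; apply: x_out; exists beta'; split=> //.
  exact: slab_tile_transfer Lb Lb' y_slab x_slab same y_in'.
Qed.

End PeelSlab.

Section Stages.
Variables (N k : nat).

Definition stage_lo (g : int) (r : nat) : int :=
  if r == 0%N then g - 3 * k%:Z else if r == 1%N then g - 2 * k%:Z else 0.

Definition stage_hi (g : int) (r : nat) : int :=
  if (r <= 2)%N then g + ((N + 3) * k)%N%:Z
  else if r == 3%N then g + ((N + 2) * k)%N%:Z
  else if r == 4%N then g + ((N + 1) * k)%N%:Z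
  else (N * k)%N%:Z.

Lemma stage_peel g r : (6 <= N)%N -> (0 < k)%N -> 0 <= g < k%:Z -> (r < 5)%N ->
  exists s (t : nat),
    [/\ end_slab (stage_lo g r) (stage_hi g r) (stage_lo g r.+1) (stage_hi g r.+1) s t,
        (k <= t <= 2 * k)%N, (t <= N * k)%N,
        (N * k)%N%:Z <= stage_hi g r.+1 - stage_lo g r.+1
      & stage_hi g r - stage_lo g r <= 2 * (N * k)%N%:Z].
Proof.
move=> N_ge6 k_gt0 g_range; rewrite /end_slab /stage_lo /stage_hi.
case: r => [|[|[|[|[|//]]]]] _ /=.
- by exists (g - 3 * k%:Z), k; split; nia.
- by exists (g - 2 * k%:Z), `|(2 * k%:Z - g)%R|%N; split; nia.
- by exists (g + ((N + 2) * k)%N%:Z), k; split; nia.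
- by exists (g + ((N + 1) * k)%N%:Z), k; split; nia.
- by exists (N * k)%N%:Z, `|(g + k%:Z)%R|%N; split; nia.
Qed.

Lemma stage_dvd g r :
  (r == 0%N) || (5 <= r)%N -> (k%:Z %| stage_hi g r - stage_lo g r)%Z.
Proof.
rewrite /stage_lo /stage_hi; case: r => [|[|[|[|[|r]]]]] //= _.
  by rewrite (_ : _ - _ = ((N + 6) * k)%N%:Z) ?PoszM ?dvdz_mull //; lia.
by rewrite subr0 PoszM dvdz_mull.
Qed.

End Stages.

Section Peeling.
Variables (d N k : nat) (L : point d -> Prop) (gamma : point d).

(* Coordinate j is cut at the times 5j, ..., 5j + 4; stage n j counts the cuts
   it has received before time n. *)
Definition stage (n : nat) (j : 'I_d) : nat := minn (n - 5 * j) 5.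

Definition peeled (n : nat) : point d -> Prop :=
  translates L (fun j => stage_lo k (gamma j) (stage n j))
               (fun j => stage_hi N k (gamma j) (stage n j)).

Lemma peeled_start x : peeled 0%N x <-> exists beta, L beta /\
  forall j, - (3 * k)%N%:Z <= x j - beta j - gamma j < ((N + 3) * k)%N%:Z.
Proof.
have stage_0 j : stage 0%N j = 0%N by rewrite /stage sub0n.
rewrite /peeled /translates.
by split=> -[beta [Lb x_in]]; exists beta; split=> // j;
  have := x_in j; rewrite stage_0 /stage_lo /stage_hi /=; lia.
Qed.

Lemma peeled_end x : peeled (5 * d)%N x <-> exists beta, L beta /\
  forall j, 0 <= x j - beta j < (N * k)%N%:Z.
Proof.
have stage_d j : stage (5 * d)%N j = 5%N by rewrite /stage; have := ltn_ord j; lia.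
rewrite /peeled /translates.
by split=> -[beta [Lb x_in]]; exists beta; split=> // j;
  have := x_in j; rewrite stage_d /stage_lo /stage_hi /=.
Qed.

Hypotheses (N_ge6 : (6 <= N)%N) (k_gt0 : (0 < k)%N)
  (L_dvd : forall beta, L beta -> forall j, ((N * k)%N%:Z %| beta j)%Z)
  (gamma_range : forall j, 0 <= gamma j < k%:Z).

Lemma peeled_step n : (n < 5 * d)%N ->
  (forall x, peeled n.+1 x -> peeled n x) /\
  tiled_by_almost_boxes k (fun x => peeled n x /\ ~ peeled n.+1 x).
Proof.
move=> n_lt; have i_lt : (n %/ 5 < d)%N by lia.
pose i := Ordinal i_lt.
have [stage_i stage_Si] : stage n i = (n %% 5)%N /\ stage n.+1 i = (n %% 5).+1.
  by rewrite /stage /=; lia.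
have := stage_peel N_ge6 k_gt0 (gamma_range i) (ltn_pmod n (isT : (0 < 5)%N)).
rewrite -stage_Si -stage_i => -[s [t [cut t_range t_le_K K_le_inner outer_le_2K]]].
apply: (peel_slab (K := (N * k)%N) (i := i) (s := s) (t := t)) => // [|j j_ne].
  exact: dvdn_mull.
have {}j_ne : (j : nat) <> (n %/ 5)%N by move=> j_eq; case/eqP: j_ne; exact: val_inj.
have [-> stage_j] : stage n.+1 j = stage n j /\ (stage n j == 0%N) || (5 <= stage n j)%N.
  by rewrite /stage; lia.
by split=> //; exact: stage_dvd.
Qed.

End Peeling.

Theorem lemma6p1 (d N k : nat) (L : point d -> Prop) (gamma : point d) :
  (10 <= N)%N -> (10 <= k)%N ->
  (forall beta, L beta -> forall i, (((N * k)%N)%:Z %| beta i)%Z) ->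
  (forall i, 0 <= gamma i < k%:Z) ->
  let A := fun x : point d => exists beta, L beta /\
             (forall i, 0 <= x i - beta i < ((N * k)%N)%:Z) in
  let B := fun x : point d => exists beta, L beta /\
             (forall i, - ((3 * k)%N)%:Z <= x i - beta i - gamma i < (((N + 3) * k)%N)%:Z) in
  tiled_by_almost_boxes k (fun x => B x /\ ~ A x).
Proof.
move=> N_ge k_ge L_dvd gamma_range A B.
have N_ge6 : (6 <= N)%N by lia.
have k_gt0 : (0 < k)%N by lia.
pose X := peeled N k L gamma.
apply: (tiled_ext (S := fun x => X 0%N x /\ ~ X (5 * d)%N x)).
  rewrite /A /B => x.
  by split=> -[x_B x_A]; split=> [|/peeled_end/x_A //]; apply/peeled_start.
apply: (tiled_chain (X := X)) => n n_lt.
exact: (peeled_step (L := L) N_ge6 k_gt0 L_dvd gamma_range n_lt).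
Qed.
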